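(* Fix a time frame $t$ and a time slot $\tau\in\{tK,tK+1,\dots,tK+K-1\}$, and consider the setting described in the context, with all data fixed except the decision variables of the respective problem. Then each of the following four optimization problems is a convex optimization problem, i.e. its feasible set is convex and its objective function is convex on it. $\mathcal{P}_{5-1}$ (variables $y_i(\tau)\in[0,1]$, $i\in\mathcal I$; $b_i(\tau),f_i(\tau),z_i(\tau)$ fixed): minimize $\sum_{i\in\mathcal I}H_i(\tau)z_i(\tau)\sum_{m\in\mathcal M}\big(T^{ul}_{i,m}(\tau)+T^{ud}_{i,m}(\tau)\big)+E(\tau)\sum_{i\in\mathcal I}\sum_{m\in\mathcal M}z_i(\tau)\big(E^{ul}_{i,m}(\tau)+E^{ud}_{i,m}(\tau)\big)-V\sum_{i\in\mathcal I}A_i(\tau)$. $\mathcal{P}_{5-2}$ (variables $b_i(\tau)\in(0,1]$, $i\in\mathcal I$; $y_i(\tau),f_i(\tau),z_i(\tau)$ fixed): minimize $\sum_{i\in\mathcal I}H_i(\tau)z_i(\tau)\sum_{m\in\mathcal M}\big(T^{ul}_{i,m}(\tau)+T^{ofld}_{i,m}(\tau)\big)+E(\tau)\sum_{i\in\mathcal I}\sum_{m\in\mathcal M}z_i(\tau)\big(E^{ul}_{i,m}(\tau)+E^{ofld}_{i,m}(\tau)\big)$ subject to $\sum_{i\in\mathcal I}a_{i,m}(t)b_i(\tau)\le 1$ for all $m\in\mathcal M$. $\mathcal{P}_{5-3}$ (variables $f_i(\tau)\in(0,1]$, $i\in\mathcal I$; $y_i(\tau),b_i(\tau),z_i(\tau)$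 fixed): minimize $\sum_{i\in\mathcal I}H_i(\tau)\Big(\sum_{m\in\mathcal M}T^{pl}_{i,m}(t)/K+z_i(\tau)\sum_{m\in\mathcal M}T^{ud}_{i,m}(\tau)+T^{exec}_i(\tau)\Big)+E(\tau)\sum_{i\in\mathcal I}\Big(\sum_{m\in\mathcal M}E^{pl}_{i,m}(t)/K+\sum_{m\in\mathcal M}z_i(\tau)E^{ud}_{i,m}(\tau)+E^{exec}_i(\tau)\Big)$ subject to $\sum_{i\in\mathcal I}a_{i,m}(t)f_i(\tau)\le 1$ for all $m\in\mathcal M$. $\mathcal{P}_{5-4}$ (variables $z_i(\tau)\in[0,1]$, $i\in\mathcal I$; $y_i(\tau),b_i(\tau),f_i(\tau)$ fixed): minimize $\sum_{i\in\mathcal I}H_i(\tau)\Big[z_i(\tau)\sum_{m\in\mathcal M}\big(T^{ul}_{i,m}(\tau)+T^{ud}_{i,m}(\tau)+T^{ofld}_{i,m}(\tau)\big)+T^{exec}_i(\tau)\Big]+E(\tau)\sum_{i\in\mathcal I}\Big[\sum_{m\in\mathcal M}z_i(\tau)\big(E^{ul}_{i,m}(\tau)+E^{ud}_{i,m}(\tau)+E^{ofld}_{i,m}(\tau)\big)+E^{exec}_i(\tau)\Big]-V\sum_{i\in\mathcal I}A_i(\tau)$.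
   Context: Finite sets $\mathcal I$ (users, ''physical twins'') and $\mathcal M$ (edge servers). $K$ is a positive integer. Fixed nonnegative constants: queue backlogs $H_i(\tau)\ge0$ ($i\in\mathcal I$) and $E(\tau)\ge 0$; $V>0$. Fixed access indicators $a_{i,m}(t)\in\{0,1\}$ with $\sum_{m}a_{i,m}(t)\le 1$ for each $i$, and fixed granularities $x_i(t)\in[0,1]$. Positive constants: $D_i(t),S_i(\tau),\lambda_i(\tau),p_i,C_i,F_i,\rho_i$ for $i\in\mathcal I$; $C_m,F_m,\rho_m,B_m$ for $m\in\mathcal M$; $N_0>0$; distances $S_{i,m}(\tau)>0$; path-loss exponent $\theta\ge 2$; complex fading coefficients $h_{i,m}(\tau)$; a constant $g_i^{local}\in[0,1]$. The decision variables (when not optimized in the given problem they are fixed constants in the same ranges) are $y_i(\tau)\in[0,1]$, $b_i(\tau)\in(0,1]$, $f_i(\tau)\in(0,1]$, $z_i(\tau)\in[0,1]$. The quantity $f_i(tK)$ equals the variable $f_i(\tau)$ if $\tau=tK$, and is otherwise a fixed constant in $(0,1]$. Definitions: transmission rate $r_{i,m}(\tau)=a_{i,m}(t)b_i(\tau)B_m\log\!\Big(1+\frac{(S_{i,m}(\tau))^\theta p_i|h_{i,m}(\tau)|^2}{N_0 b_i(\tau)B_m}\Big)$; $T^{ul}_{i,m}(\tau)=\frac{y_i(\tau)S_i(\tau)}{r_{i,m}(\tau)}$, $E^{ul}_{i,m}(\tau)=p_iT^{ul}_{i,m}(\tau)$; $T^{ofld}_{i,m}(\tau)=\frac{\lambda_i(\tau)}{r_{i,m}(\tau)}$,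 $E^{ofld}_{i,m}(\tau)=p_iT^{ofld}_{i,m}(\tau)$; (convention: when $a_{i,m}(t)=0$, the terms $T^{ul}_{i,m},E^{ul}_{i,m},T^{ofld}_{i,m},E^{ofld}_{i,m}$ are taken to be $0$); $T^{ud}_{i,m}(\tau)=\frac{a_{i,m}(t)y_i(\tau)S_i(\tau)C_m}{f_i(\tau)F_m}$, $E^{ud}_{i,m}(\tau)=\rho_mf_i(\tau)F_m^3T^{ud}_{i,m}(\tau)$; $T^{pl}_{i,m}(t)=\frac{a_{i,m}(t)x_i(t)D_i(t)C_m}{f_i(tK)F_m}$, $E^{pl}_{i,m}(t)=\rho_mf_i(tK)F_m^3T^{pl}_{i,m}(t)$; $T^{exec}_i(\tau)=\sum_{m}a_{i,m}(t)z_i(\tau)\frac{\lambda_i(\tau)C_m}{f_i(\tau)F_m}+(1-z_i(\tau))\frac{\lambda_i(\tau)C_i}{F_i}$; $E^{exec}_i(\tau)=\sum_m a_{i,m}(t)z_i(\tau)\rho_mF_m^2\lambda_i(\tau)C_m+(1-z_i(\tau))\rho_iF_i^2\lambda_i(\tau)C_i$; accuracy $A_i(\tau)=z_i(\tau)g_i^{edge}(d_i(\tau))+(1-z_i(\tau))g_i^{local}$ with $d_i(\tau)=x_i(t)D_i(t)+y_i(\tau)S_i(\tau)$ and $g_i^{edge}(d)=1-\big(1-\frac{d}{D_i(t)+S_i(\tau)}\big)^2$. *)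

From HB Require Import structures.
From mathcomp Require Import all_boot all_order all_algebra.
From mathcomp Require Import reals exp.
From mathcomp Require Import complex.
Set Implicit Arguments. Unset Strict Implicit. Unset Printing Implicit Defensive.
Import Order.TTheory GRing.Theory Num.Theory.
Local Open Scope ring_scope.

Record data (R : realType) (I M : finType) := Data {
  Hq : I -> R;            (* queue backlogs H_i(tau) *)
  Eq : R;                 (* energy queue E(tau) *)
  Vw : R;
  acc : I -> M -> R;
  gran : I -> R;
  Dt : I -> R;
  St : I -> R;
  lam : I -> R;
  pw : I -> R;
  Cu : I -> R;
  Fu : I -> R;
  rhou : I -> R;
  Cs : M -> R;
  Fs : M -> R;
  rhos : M -> R;
  Bs : M -> R;
  N0 : R;
  dist : I -> M -> R;
  theta : R;              (* path-loss exponent *)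
  fad : I -> M -> R[i];
  glocal : I -> R
}.

Section Model.
Variables (R : realType) (I M : finType) (d : data R I M).

Definition rate (b : I -> R) i m : R :=
  acc d i m * b i * Bs d m *
  ln (1 + (dist d i m `^ theta d) * pw d i * (ComplexField.Normc.normc (fad d i m)) ^+ 2
          / (N0 d * b i * Bs d m)).

Definition Tul (y b : I -> R) i m : R :=
  if acc d i m == 0 then 0 else y i * St d i / rate b i m.
Definition Eul (y b : I -> R) i m : R := pw d i * Tul y b i m.
Definition Tofld (b : I -> R) i m : R :=
  if acc d i m == 0 then 0 else lam d i / rate b i m.
Definition Eofld (b : I -> R) i m : R := pw d i * Tofld b i m.
Definition Tud (y f : I -> R) i m : R :=
  acc d i m * y i * St d i * Cs d m / (f i * Fs d m).
Definition Eud (y f : I -> R) i m : R :=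
  rhos d m * f i * Fs d m ^+ 3 * Tud y f i m.
(* ftK = the vector (f_i(tK))_i *)
Definition Tpl (ftK : I -> R) i m : R :=
  acc d i m * gran d i * Dt d i * Cs d m / (ftK i * Fs d m).
Definition Epl (ftK : I -> R) i m : R :=
  rhos d m * ftK i * Fs d m ^+ 3 * Tpl ftK i m.
Definition Texec (f z : I -> R) i : R :=
  \sum_m acc d i m * z i * (lam d i * Cs d m / (f i * Fs d m))
  + (1 - z i) * (lam d i * Cu d i / Fu d i).
Definition Eexec (z : I -> R) i : R :=
  \sum_m acc d i m * z i * rhos d m * Fs d m ^+ 2 * lam d i * Cs d m
  + (1 - z i) * rhou d i * Fu d i ^+ 2 * lam d i * Cu d i.
Definition gedge i (dd : R) : R := 1 - (1 - dd / (Dt d i + St d i)) ^+ 2.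
Definition Acc (y z : I -> R) i : R :=
  z i * gedge i (gran d i * Dt d i + St d i * y i) + (1 - z i) * glocal d i.

(* f_i(tK): the variable f_i(tau) if tau = tK, otherwise the fixed constant fK_i *)
Definition f_tK (t K tau : nat) (fK f : I -> R) : I -> R :=
  fun i => if tau == (t * K)%N then f i else fK i.

Definition obj1 (b f z : I -> R) (y : I -> R) : R :=
  \sum_i Hq d i * z i * \sum_m (Tul y b i m + Tud y f i m)
  + Eq d * \sum_i \sum_m z i * (Eul y b i m + Eud y f i m)
  - Vw d * \sum_i Acc y z i.
Definition obj2 (y f z : I -> R) (b : I -> R) : R :=
  \sum_i Hq d i * z i * \sum_m (Tul y b i m + Tofld b i m)
  + Eq d * \sum_i \sum_m z i * (Eul y b i m + Eofld b i m).
Definition obj3 (t K tau : nat) (fK y b z : I -> R) (f : I -> R) : R :=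
  \sum_i Hq d i * (\sum_m Tpl (f_tK t K tau fK f) i m / K%:R
                   + z i * \sum_m Tud y f i m + Texec f z i)
  + Eq d * \sum_i (\sum_m Epl (f_tK t K tau fK f) i m / K%:R
                   + \sum_m z i * Eud y f i m + Eexec z i).
Definition obj4 (y b f : I -> R) (z : I -> R) : R :=
  \sum_i Hq d i * (z i * \sum_m (Tul y b i m + Tud y f i m + Tofld b i m)
                   + Texec f z i)
  + Eq d * \sum_i (\sum_m z i * (Eul y b i m + Eud y f i m + Eofld b i m)
                   + Eexec z i)
  - Vw d * \sum_i Acc y z i.

Definition feas1 (y : I -> R) : Prop := forall i, 0 <= y i <= 1.
Definition feas2 (b : I -> R) : Prop :=
  (forall i, 0 < b i <= 1) /\ (forall m, \sum_i acc d i m * b i <= 1).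
Definition feas3 (f : I -> R) : Prop :=
  (forall i, 0 < f i <= 1) /\ (forall m, \sum_i acc d i m * f i <= 1).
Definition feas4 (z : I -> R) : Prop := forall i, 0 <= z i <= 1.

End Model.

Definition convex_set (R : realType) (I : finType) (S : (I -> R) -> Prop) : Prop :=
  forall (u v : I -> R) (l : R), S u -> S v -> 0 <= l <= 1 ->
    S (fun i => l * u i + (1 - l) * v i).
Definition convex_on (R : realType) (I : finType) (S : (I -> R) -> Prop)
  (F : (I -> R) -> R) : Prop :=
  forall (u v : I -> R) (l : R), S u -> S v -> 0 <= l <= 1 ->
    F (fun i => l * u i + (1 - l) * v i) <= l * F u + (1 - l) * F v.
Definition convex_problem (R : realType) (I : finType) (S : (I -> R) -> Prop)
  (F : (I -> R) -> R) : Prop := convex_set S /\ convex_on S F.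

From mathcomp Require Import all_boot all_order all_algebra.
From mathcomp Require Import interval_inference reals exp.
From mathcomp Require convex.
From mathcomp Require Import complex.
From mathcomp Require Import ring lra.
Import Order.TTheory GRing.Theory Num.Theory.
Local Open Scope ring_scope.
Set Implicit Arguments. Unset Strict Implicit.

(* Every objective is a nonnegative combination of terms that are either
   affine in the decision variable or of one of three convex shapes:
   - c / r(b), where the rate r(b) = b B ln (1 + k / (N0 b B)) is the
     perspective w ln (1 + k' / w) of the concave map x |-> ln (1 + k' x),
     hence concave and positive, so that its reciprocal is convex;
   - c / (f F), convex for f > 0;
   - the negated accuracy -A_i, since g^edge is a concave quadratic of an
     affine function of y.
   The energies E^ud and E^pl do not depend on f at all, as
   rho f F^3 * c / (f F) = rho F^2 c, and P_{5-4} is affine in z.  The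
   feasible sets are boxes intersected with half-spaces. *)

Section RealInequalities.
Variable R : realType.
Implicit Types l a b c u v w : R.

Lemma convex_comb_gt0 l u v : 0 <= l <= 1 -> 0 < u -> 0 < v ->
  0 < l * u + (1 - l) * v.
Proof.
move=> /andP[l0 l1] u0 v0; have [l_gt0|l_le0] := ltrP 0 l.
  by apply: ltr_pwDl; [apply: mulr_gt0 | apply: mulr_ge0; lra].
have -> : l = 0 by lra.
by rewrite mul0r add0r subr0 mul1r.
Qed.

Lemma convex_comb_le l a b c : 0 <= l <= 1 -> a <= c -> b <= c ->
  l * a + (1 - l) * b <= c.
Proof.
move=> /andP[l0 l1] ac bc.
have : l * a <= l * c by apply: ler_wpM2l.
have : (1 - l) * b <= (1 - l) * c by apply: ler_wpM2l; lra.
lra.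
Qed.

Lemma ln_concave l a b : 0 <= l <= 1 -> 0 < a -> 0 < b ->
  l * ln a + (1 - l) * ln b <= ln (l * a + (1 - l) * b).
Proof.
move=> /andP[l0 l1] a0 b0.
by have := concave_ln (Itv01 l0 l1) a0 b0; rewrite !convex.convRE.
Qed.

Lemma perspective_ln1D_concave l c u v : 0 <= l <= 1 -> 0 <= c ->
  0 < u -> 0 < v ->
  l * (u * ln (1 + c / u)) + (1 - l) * (v * ln (1 + c / v))
  <= (l * u + (1 - l) * v) * ln (1 + c / (l * u + (1 - l) * v)).
Proof.
move=> hl c0 u0 v0; have w0 := convex_comb_gt0 hl u0 v0.
set w := l * u + (1 - l) * v in w0 *; have /andP[l0 l1] := hl.
have hlw : 0 <= l * u / w <= 1.
  apply/andP; split; first by apply: divr_ge0; [apply: mulr_ge0 | ]; lra.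
  rewrite ler_pdivrMr // mul1r /w.
  have : 0 <= (1 - l) * v by apply: mulr_ge0; lra.
  lra.
have pos (x : R) : 0 < x -> 0 < 1 + c / x.
  by move=> x0; rewrite ltr_wpDr // divr_ge0 // ltW.
have := ler_wpM2l (ltW w0) (ln_concave hlw (pos _ u0) (pos _ v0)).
have -> : l * u / w * (1 + c / u) + (1 - l * u / w) * (1 + c / v) = 1 + c / w.
  by rewrite /w; field; rewrite -/w !lt0r_neq0.
by congr (_ <= _); rewrite /w; field; rewrite -/w lt0r_neq0.
Qed.

Lemma invr_convex l u v : 0 <= l <= 1 -> 0 < u -> 0 < v ->
  (l * u + (1 - l) * v)^-1 <= l * u^-1 + (1 - l) * v^-1.
Proof.
move=> hl u0 v0; have w0 := convex_comb_gt0 hl u0 v0; have /andP[l0 l1] := hl.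
rewrite -subr_ge0.
have -> : l * u^-1 + (1 - l) * v^-1 - (l * u + (1 - l) * v)^-1 =
    l * (1 - l) * (u - v) ^+ 2 / (u * v * (l * u + (1 - l) * v)).
  by field; rewrite !lt0r_neq0.
apply: divr_ge0; last by rewrite ltW // !mulr_gt0.
by apply: mulr_ge0; [apply: mulr_ge0; lra | apply: sqr_ge0].
Qed.

Lemma div_concave_le l c g gu gv : 0 <= l <= 1 -> 0 <= c -> 0 < gu -> 0 < gv ->
  l * gu + (1 - l) * gv <= g -> c / g <= l * (c / gu) + (1 - l) * (c / gv).
Proof.
move=> hl c0 gu0 gv0 gle; have gm0 := convex_comb_gt0 hl gu0 gv0.
rewrite -[l * _]mulrCA -[(1 - l) * _]mulrCA -mulrDr.
apply: ler_wpM2l => //; apply: le_trans (invr_convex hl gu0 gv0).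
by rewrite lef_pV2 ?posrE // (lt_le_trans gm0).
Qed.

Lemma sqr_convex l a b : 0 <= l <= 1 ->
  (l * a + (1 - l) * b) ^+ 2 <= l * a ^+ 2 + (1 - l) * b ^+ 2.
Proof.
move=> /andP[l0 l1]; rewrite -subr_ge0.
have -> : l * a ^+ 2 + (1 - l) * b ^+ 2 - (l * a + (1 - l) * b) ^+ 2
    = l * (1 - l) * (a - b) ^+ 2 by ring.
by apply: mulr_ge0; [apply: mulr_ge0; lra | exact: sqr_ge0].
Qed.

End RealInequalities.

Section ConvexOn.
Variables (R : realType) (I : finType) (S : (I -> R) -> Prop).
Implicit Types (c : R) (F G : (I -> R) -> R).

Definition affine_on F : Prop :=
  forall u v l, S u -> S v -> 0 <= l <= 1 ->
    F (fun i => l * u i + (1 - l) * v i) = l * F u + (1 - l) * F v.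

Lemma affine_on_convex F : affine_on F -> convex_on S F.
Proof. by move=> hF u v l Su Sv hl; rewrite hF. Qed.

Lemma affine_on_const c : affine_on (fun _ => c).
Proof. by move=> u v l _ _ _; ring. Qed.

Lemma affine_on_const_on c F : convex_set S -> (forall x, S x -> F x = c) ->
  affine_on F.
Proof. by move=> cS hF u v l Su Sv hl; rewrite !hF //; [ring | exact: cS]. Qed.

Lemma affine_onD F G : affine_on F -> affine_on G ->
  affine_on (fun x => F x + G x).
Proof. by move=> hF hG u v l Su Sv hl; rewrite hF ?hG //; ring. Qed.

Lemma affine_onN F : affine_on F -> affine_on (fun x => - F x).
Proof. by move=> hF u v l Su Sv hl; rewrite hF //; ring. Qed.

Lemma affine_onZl c F : affine_on F -> affine_on (fun x => c * F x).
Proof. by move=> hF u v l Su Sv hl; rewrite hF //; ring. Qed.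

Lemma affine_onZr c F : affine_on F -> affine_on (fun x => F x * c).
Proof. by move=> hF u v l Su Sv hl; rewrite hF //; ring. Qed.

Lemma affine_on_sum (J : finType) (F : J -> (I -> R) -> R) :
  (forall j, affine_on (F j)) -> affine_on (fun x => \sum_j F j x).
Proof.
move=> hF u v l Su Sv hl; rewrite !mulr_sumr -big_split /=.
by apply: eq_bigr => j _; rewrite hF.
Qed.

Lemma convex_onD F G : convex_on S F -> convex_on S G ->
  convex_on S (fun x => F x + G x).
Proof.
move=> hF hG u v l Su Sv hl.
have -> : l * (F u + G u) + (1 - l) * (F v + G v)
    = (l * F u + (1 - l) * F v) + (l * G u + (1 - l) * G v) by ring.
exact: lerD (hF u v l Su Sv hl) (hG u v l Su Sv hl).
Qed.

Lemma convex_onZl c F : 0 <= c -> convex_on S F ->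
  convex_on S (fun x => c * F x).
Proof.
move=> c0 hF u v l Su Sv hl; rewrite mulrCA [(1 - l) * _]mulrCA -mulrDr.
exact: ler_wpM2l (hF u v l Su Sv hl).
Qed.

Lemma convex_onZr c F : 0 <= c -> convex_on S F ->
  convex_on S (fun x => F x * c).
Proof.
move=> c0 hF u v l Su Sv hl; rewrite !mulrA -mulrDl.
exact: ler_wpM2r (hF u v l Su Sv hl).
Qed.

Lemma convex_on_sum (J : finType) (F : J -> (I -> R) -> R) :
  (forall j, convex_on S (F j)) -> convex_on S (fun x => \sum_j F j x).
Proof.
move=> hF u v l Su Sv hl; rewrite !mulr_sumr -big_split /=.
by apply: ler_sum => j _; apply: hF.
Qed.

Lemma convex_onN_sum (J : finType) c (G : J -> (I -> R) -> R) : 0 <= c ->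
  (forall j, convex_on S (fun x => - G j x)) ->
  convex_on S (fun x => - (c * \sum_j G j x)).
Proof.
move=> c0 hG; have eqN x : - (c * \sum_j G j x) = c * \sum_j - G j x.
  by rewrite sumrN mulrN.
move=> u v l Su Sv hl; rewrite !eqN.
exact: (convex_onZl c0 (convex_on_sum hG)).
Qed.

Lemma convex_on_div_concave c g : 0 <= c -> (forall x, S x -> 0 < g x) ->
  (forall u v l, S u -> S v -> 0 <= l <= 1 ->
     l * g u + (1 - l) * g v <= g (fun i => l * u i + (1 - l) * v i)) ->
  convex_on S (fun x => c / g x).
Proof.
by move=> c0 g0 hg u v l Su Sv hl; apply: div_concave_le; rewrite ?g0 ?hg.
Qed.

Lemma convex_on_div_coord c (w : R) i : 0 <= c -> 0 < w ->
  (forall x, S x -> 0 < x i) -> convex_on S (fun x => c / (x i * w)).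
Proof.
move=> c0 w0 pos; apply: convex_on_div_concave => // [x Sx|u v l _ _ _].
  by rewrite mulr_gt0 // pos.
by rewrite [X in _ <= X]mulrDl !mulrA.
Qed.

Lemma convex_set_unit_box :
  convex_set (fun x : I -> R => forall i, 0 <= x i <= 1).
Proof.
move=> u v l Su Sv /[dup] hl /andP[l0 l1] i.
have /andP[u0 u1] := Su i; have /andP[v0 v1] := Sv i.
rewrite convex_comb_le ?andbT //; apply: addr_ge0; apply: mulr_ge0; lra.
Qed.

Lemma convex_set_budget (J : finType) (a : I -> J -> R) :
  convex_set (fun x : I -> R =>
    (forall i, 0 < x i <= 1) /\ (forall j, \sum_i a i j * x i <= 1)).
Proof.
move=> u v l [Su1 Su2] [Sv1 Sv2] hl; split=> [i|j].
  have /andP[u0 u1] := Su1 i; have /andP[v0 v1] := Sv1 i.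
  by rewrite convex_comb_gt0 ?convex_comb_le.
have -> : \sum_i a i j * (l * u i + (1 - l) * v i)
    = l * \sum_i a i j * u i + (1 - l) * \sum_i a i j * v i.
  by rewrite !mulr_sumr -big_split /=; apply: eq_bigr => i _; ring.
exact: convex_comb_le.
Qed.

End ConvexOn.

Section Model.
Variables (R : realType) (I M : finType) (d : data R I M).
Implicit Types (y b f z : I -> R) (c : R).

Hypothesis Hq_ge0 : forall i, 0 <= Hq d i.
Hypothesis Eq_ge0 : 0 <= Eq d.
Hypothesis Vw_ge0 : 0 <= Vw d.
Hypothesis acc_ge0 : forall i m, 0 <= acc d i m.
Hypothesis gran_ge0 : forall i, 0 <= gran d i.
Hypothesis Dt_ge0 : forall i, 0 <= Dt d i.
Hypothesis St_ge0 : forall i, 0 <= St d i.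
Hypothesis lam_ge0 : forall i, 0 <= lam d i.
Hypothesis pw_ge0 : forall i, 0 <= pw d i.
Hypothesis Cs_ge0 : forall m, 0 <= Cs d m.
Hypothesis Fs_gt0 : forall m, 0 < Fs d m.
Hypothesis Bs_gt0 : forall m, 0 < Bs d m.
Hypothesis N0_gt0 : 0 < N0 d.

Definition gain i m : R :=
  dist d i m `^ theta d * pw d i * ComplexField.Normc.normc (fad d i m) ^+ 2.

Lemma gain_ge0 i m : 0 <= gain i m.
Proof.
by apply: mulr_ge0; [apply: mulr_ge0 => //; exact: powR_ge0 | exact: sqr_ge0].
Qed.

Lemma rateE b i m : rate d b i m =
  acc d i m * (b i * Bs d m * ln (1 + gain i m / N0 d / (b i * Bs d m))).
Proof.
by rewrite /rate -/(gain i m) -!mulrA invfM [(N0 d)^-1 * _]mulrC !mulrA.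
Qed.

Lemma rate_gt0 b i m : 0 < acc d i m -> 0 < gain i m -> 0 < b i ->
  0 < rate d b i m.
Proof.
move=> a0 g0 b0; rewrite rateE !mulr_gt0 // ln_gt0 //.
by rewrite ltrDl; apply: divr_gt0; [exact: divr_gt0 | exact: mulr_gt0].
Qed.

Lemma rate_concave u v l i m : 0 < u i -> 0 < v i -> 0 <= l <= 1 ->
  l * rate d u i m + (1 - l) * rate d v i m
  <= rate d (fun j => l * u j + (1 - l) * v j) i m.
Proof.
move=> u0 v0 hl; rewrite !rateE mulrCA [(1 - l) * _]mulrCA -mulrDr.
apply: ler_wpM2l => //=.
have -> : (l * u i + (1 - l) * v i) * Bs d m
    = l * (u i * Bs d m) + (1 - l) * (v i * Bs d m) by ring.
apply: perspective_ln1D_concave => //; last 2 first.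
- exact: mulr_gt0.
- exact: mulr_gt0.
exact: divr_ge0 (gain_ge0 i m) (ltW N0_gt0).
Qed.

(* When a_{i,m}(t) = 0 or h_{i,m} = 0 the rate vanishes, and c / 0 = 0. *)
Lemma convex_on_div_rate c i m : 0 <= c ->
  convex_on (feas2 d) (fun b => if acc d i m == 0 then 0 else c / rate d b i m).
Proof.
move=> c0; case: eqP => [_|/eqP a_neq0].
  by move=> u v l _ _ _; rewrite !mulr0 addr0.
have [g_eq0|g_neq0] := eqVneq (gain i m) 0.
  move=> u v l _ _ _.
  by rewrite !rateE g_eq0 !mul0r addr0 ln1 !mulr0 invr0 !mulr0 addr0.
apply: convex_on_div_concave => // [b [hb _]|u v l [hu _] [hv _] hl].
  apply: rate_gt0; first by rewrite lt0r a_neq0 acc_ge0.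
    by rewrite lt0r g_neq0 gain_ge0.
  by case/andP: (hb i).
by apply: rate_concave => //; [case/andP: (hu i) | case/andP: (hv i)].
Qed.

Lemma affine_on_Tul_y (S : (I -> R) -> Prop) b i m :
  affine_on S (fun y => Tul d y b i m).
Proof. by move=> u v l _ _ _; rewrite /Tul; case: eqP => _; ring. Qed.

Lemma affine_on_Tud_y (S : (I -> R) -> Prop) f i m :
  affine_on S (fun y => Tud d y f i m).
Proof. by move=> u v l _ _ _; rewrite /Tud; ring. Qed.

Lemma convex_on_oppAcc_y (S : (I -> R) -> Prop) z i : 0 <= z i ->
  convex_on S (fun y => - Acc d y z i).
Proof.
move=> z0 u v l _ _ hl; rewrite /Acc /gedge /=.
set Q := Dt d i + St d i; set x0 := gran d i * Dt d i.
have -> : 1 - (x0 + St d i * (l * u i + (1 - l) * v i)) / Q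
    = l * (1 - (x0 + St d i * u i) / Q)
      + (1 - l) * (1 - (x0 + St d i * v i) / Q).
  by ring.
set a := 1 - (x0 + St d i * u i) / Q; set a' := 1 - (x0 + St d i * v i) / Q.
rewrite -subr_ge0.
have -> : l * - (z i * (1 - a ^+ 2) + (1 - z i) * glocal d i)
    + (1 - l) * - (z i * (1 - a' ^+ 2) + (1 - z i) * glocal d i)
    - - (z i * (1 - (l * a + (1 - l) * a') ^+ 2) + (1 - z i) * glocal d i)
    = z i * (l * a ^+ 2 + (1 - l) * a' ^+ 2 - (l * a + (1 - l) * a') ^+ 2).
  by ring.
by rewrite mulr_ge0 // subr_ge0 sqr_convex.
Qed.

Lemma convex_problem1 b f z : (forall i, 0 <= z i) ->
  convex_problem (@feas1 R I) (obj1 d b f z).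
Proof.
move=> z_ge0; split; first exact: convex_set_unit_box.
rewrite /obj1; apply: convex_onD; last first.
  by apply: convex_onN_sum => // i; apply: convex_on_oppAcc_y.
apply: affine_on_convex; apply: affine_onD.
  apply: affine_on_sum => i; apply: affine_onZl; apply: affine_on_sum => m.
  by apply: affine_onD; [apply: affine_on_Tul_y | apply: affine_on_Tud_y].
apply: affine_onZl; apply: affine_on_sum => i; apply: affine_on_sum => m.
rewrite /Eul /Eud; apply: affine_onZl; apply: affine_onD; apply: affine_onZl.
  exact: affine_on_Tul_y.
exact: affine_on_Tud_y.
Qed.

Lemma convex_problem2 y f z : (forall i, 0 <= y i) -> (forall i, 0 <= z i) ->
  convex_problem (feas2 d) (obj2 d y f z).
Proof.
move=> y_ge0 z_ge0; split; first exact: convex_set_budget.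
have Tul_cvx i m : convex_on (feas2 d) (fun b => Tul d y b i m).
  by apply: convex_on_div_rate; rewrite mulr_ge0.
have Tofld_cvx i m : convex_on (feas2 d) (fun b => Tofld d b i m).
  exact: convex_on_div_rate.
rewrite /obj2; apply: convex_onD.
  apply: convex_on_sum => i; apply: convex_onZl; first by rewrite mulr_ge0.
  by apply: convex_on_sum => m; apply: convex_onD.
apply: convex_onZl => //; apply: convex_on_sum => i; apply: convex_on_sum => m.
rewrite /Eul /Eofld; apply: convex_onZl => //.
by apply: convex_onD; apply: convex_onZl.
Qed.

Lemma EudE y f i m : 0 < f i -> Eud d y f i m =
  rhos d m * Fs d m ^+ 2 * (acc d i m * y i * St d i * Cs d m).
Proof. by move=> f0; rewrite /Eud /Tud; field; rewrite !lt0r_neq0. Qed.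

Lemma EplE ftK i m : 0 < ftK i -> Epl d ftK i m =
  rhos d m * Fs d m ^+ 2 * (acc d i m * gran d i * Dt d i * Cs d m).
Proof. by move=> f0; rewrite /Epl /Tpl; field; rewrite !lt0r_neq0. Qed.

Lemma convex_problem3 t K tau fK y b z : (forall i, 0 <= y i) ->
  (forall i, 0 <= z i) -> convex_problem (feas3 d) (obj3 d t K tau fK y b z).
Proof.
move=> y_ge0 z_ge0; have cS : convex_set (feas3 d) by exact: convex_set_budget.
have f_gt0 i f : feas3 d f -> 0 < f i by case=> hf _; case/andP: (hf i).
split=> //; rewrite /obj3 /f_tK; apply: convex_onD.
  apply: convex_on_sum => i; apply: convex_onZl => //.
  apply: convex_onD; first apply: convex_onD.
  - apply: convex_on_sum => m; apply: convex_onZr; first by rewrite invr_ge0.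
    case: (tau == _); last exact: affine_on_convex (affine_on_const _).
    by apply: convex_on_div_coord => //; [do ?apply: mulr_ge0 | exact: f_gt0].
  - apply: convex_onZl => //; apply: convex_on_sum => m.
    by apply: convex_on_div_coord => //; [do ?apply: mulr_ge0 | exact: f_gt0].
  - rewrite /Texec; apply: convex_onD; last first.
      exact: affine_on_convex (affine_on_const _).
    apply: convex_on_sum => m; apply: convex_onZl; first by rewrite mulr_ge0.
    by apply: convex_on_div_coord => //; [do ?apply: mulr_ge0 | exact: f_gt0].
apply: affine_on_convex; apply: affine_onZl; apply: affine_on_sum => i.
apply: affine_onD; last exact: affine_on_const.
apply: affine_onD; apply: affine_on_sum => m.
  apply: affine_onZr; case: (tau == _); last exact: affine_on_const.
  by apply: affine_on_const_on cS _ => f /(f_gt0 i) /EplE ->.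
by apply: affine_onZl; apply: affine_on_const_on cS _ => f /(f_gt0 i) /EudE ->.
Qed.

Lemma convex_problem4 y b f : convex_problem (@feas4 R I) (obj4 d y b f).
Proof.
split; first exact: convex_set_unit_box.
rewrite /obj4 /Texec /Eexec /Acc; apply: affine_on_convex.
apply: affine_onD; first apply: affine_onD.
- apply: affine_on_sum => i; apply: affine_onZl.
  apply: affine_onD; first by move=> u v l _ _ _; ring.
  apply: affine_onD; last by move=> u v l _ _ _; ring.
  by apply: affine_on_sum => m u v l _ _ _; ring.
- apply: affine_onZl; apply: affine_on_sum => i.
  apply: affine_onD; first by apply: affine_on_sum => m u v l _ _ _; ring.
  apply: affine_onD; last by move=> u v l _ _ _; ring.
  by apply: affine_on_sum => m u v l _ _ _; ring.
- apply: affine_onN; apply: affine_onZl.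
  by apply: affine_on_sum => i u v l _ _ _; ring.
Qed.

End Model.

Unset Implicit Arguments.

Theorem theorem2 (R : realType) (I M : finType) (d : data R I M)
  (t K tau : nat) (y b f z fK : I -> R)
  (hK : (0 < K)%N) (htau : (t * K <= tau < t * K + K)%N)
  (hH : forall i, 0 <= Hq d i) (hE : 0 <= Eq d) (hV : 0 < Vw d)
  (ha01 : forall i m, acc d i m = 0 \/ acc d i m = 1)
  (ha1 : forall i, \sum_m acc d i m <= 1)
  (hx : forall i, 0 <= gran d i <= 1)
  (hD : forall i, 0 < Dt d i) (hS : forall i, 0 < St d i)
  (hlam : forall i, 0 < lam d i) (hp : forall i, 0 < pw d i)
  (hCi : forall i, 0 < Cu d i) (hFi : forall i, 0 < Fu d i)
  (hrhoi : forall i, 0 < rhou d i)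
  (hCm : forall m, 0 < Cs d m) (hFm : forall m, 0 < Fs d m)
  (hrhom : forall m, 0 < rhos d m) (hBm : forall m, 0 < Bs d m)
  (hN0 : 0 < N0 d) (hdist : forall i m, 0 < dist d i m)
  (htheta : 2 <= theta d)
  (hgl : forall i, 0 <= glocal d i <= 1)
  (hy : forall i, 0 <= y i <= 1) (hb : forall i, 0 < b i <= 1)
  (hf : forall i, 0 < f i <= 1) (hz : forall i, 0 <= z i <= 1)
  (hfK : forall i, 0 < fK i <= 1) :
  convex_problem (@feas1 R I) (obj1 d b f z)
  /\ convex_problem (feas2 d) (obj2 d y f z)
  /\ convex_problem (feas3 d) (obj3 d t K tau fK y b z)
  /\ convex_problem (@feas4 R I) (obj4 d y b f).
Proof.
have acc_ge0 i m : 0 <= acc d i m by case: (ha01 i m) => ->.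
have gran_ge0 i : 0 <= gran d i by case/andP: (hx i).
have y_ge0 i : 0 <= y i by case/andP: (hy i).
have z_ge0 i : 0 <= z i by case/andP: (hz i).
have Dt_ge0 i : 0 <= Dt d i := ltW (hD i).
have St_ge0 i : 0 <= St d i := ltW (hS i).
have lam_ge0 i : 0 <= lam d i := ltW (hlam i).
have pw_ge0 i : 0 <= pw d i := ltW (hp i).
have Cs_ge0 m : 0 <= Cs d m := ltW (hCm m).
have Vw_ge0 : 0 <= Vw d := ltW hV.
split; first exact: convex_problem1.
split; first exact: convex_problem2.
split; first exact: convex_problem3.
exact: convex_problem4.
Qed.
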